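(* Let $q$ be a prime power and $\mathcal{U}\subseteq\mathbb{P}_q(n)$ a linear code with $|\mathcal{U}|\ge 2$. Then its normalized minimum distance satisfies $\delta\le\frac12$, and $\delta=\frac12$ if and only if $\mathcal{U}$ is equidistant. In particular, the largest normalized minimum distance of a linear code in $\mathbb{P}_q(n)$ is $\frac12$.
   Context: $\mathbb{P}_q(n)$ denotes the set of all subspaces of $\mathbb{F}_q^n$. For $X,Y\in\mathbb{P}_q(n)$ the subspace distance is $d_S(X,Y)=\dim X+\dim Y-2\dim(X\cap Y)$. A linear code in $\mathbb{P}_q(n)$ is a subset $\mathcal{U}\subseteq\mathbb{P}_q(n)$ with $\{0\}\in\mathcal{U}$ for which there exists a map $\boxplus:\mathcal{U}\times\mathcal{U}\to\mathcal{U}$ such that (i) $(\mathcal{U},\boxplus)$ is an abelian group; (ii) its identity element is $\{0\}$; (iii) $X\boxplus X=\{0\}$ for all $X\in\mathcal{U}$; (iv) $d_S(Y_1\boxplus X,Y_2\boxplus X)=d_S(Y_1,Y_2)$ for all $Y_1,Y_2,X\in\mathcal{U}$. A linear code is equidistant if there is $r$ with $d_S(X,Y)=r$ for all distinct $X,Y\in\mathcal{U}$. With $d=\min\{d_S(X,Y):X,Y\in\mathcal{U},X\ne Y\}$ (the minimum distance) and $l=\max_{X\in\mathcal{U}}\dim X$, the normalized minimum distance is $\delta=d/(2l)$. *)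

(* Subspaces of F_q^n are {vspace 'rV[F]_n} for a finite field F
   (q = #|F|, automatically a prime power). *)
From HB Require Import structures.
From mathcomp Require Import all_boot all_order all_algebra.
Set Implicit Arguments. Unset Strict Implicit. Unset Printing Implicit Defensive.
Import Order.TTheory GRing.Theory Num.Theory.

Local Open Scope ring_scope.

Section Defs.
Variables (F : finFieldType) (n : nat).
Notation sub := {vspace 'rV[F]_n}.

(* subspace distance d_S(X,Y) = dim X + dim Y - 2 dim (X cap Y) (no truncation
   actually occurs since dim (X :&: Y) <= dim X, dim Y) *)
Definition subspace_dist (X Y : sub) : nat :=
  (\dim X + \dim Y - 2 * \dim (X :&: Y))%N.

(* A code is a finite set of subspaces, given as a duplicate-free list. *)
Definition is_linear_code (U : seq sub) : Prop :=
  uniq U /\ (0%VS \in U) /\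
  exists boxplus : sub -> sub -> sub,
    (forall X Y, X \in U -> Y \in U -> boxplus X Y \in U) /\
    [/\ 
        (forall X Y Z, X \in U -> Y \in U -> Z \in U ->
            boxplus X (boxplus Y Z) = boxplus (boxplus X Y) Z),
        (forall X Y, X \in U -> Y \in U -> boxplus X Y = boxplus Y X),
        (forall X, X \in U -> boxplus 0%VS X = X),
        (forall X, X \in U -> boxplus X X = 0%VS) &
        (forall Y1 Y2 X, Y1 \in U -> Y2 \in U -> X \in U ->
            subspace_dist (boxplus Y1 X) (boxplus Y2 X) = subspace_dist Y1 Y2)].

Definition is_equidistant (U : seq sub) : Prop :=
  exists r : nat, forall X Y, X \in U -> Y \in U -> X != Y -> subspace_dist X Y = r.

Definition is_min_dist (U : seq sub) (d : nat) : Prop :=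
  (exists X Y, [/\ X \in U, Y \in U, X != Y & subspace_dist X Y = d]) /\
  (forall X Y, X \in U -> Y \in U -> X != Y -> (d <= subspace_dist X Y)%N).

Definition is_max_dim (U : seq sub) (l : nat) : Prop :=
  (exists2 X, X \in U & \dim X = l) /\ (forall X, X \in U -> (\dim X <= l)%N).

Definition normalized (d l : nat) : rat := (d%:R / (2 * l)%:R).

End Defs.

(** Translation invariance gives d(X, Y) = d(X ⊞ Y, Y ⊞ Y) = d(X ⊞ Y, 0) = dim (X ⊞ Y),
    so every distance in a linear code is the dimension of a codeword and hence at
    most l; in particular d <= l, i.e. δ <= 1/2.  Equality d = l squeezes all distances
    between d and l, and conversely in an equidistant code the common distance is
    d(X, 0) = l for a codeword X of maximal dimension.  The code {0, F^n}, with
    X ⊞ Y = 0 if X = Y and F^n otherwise, attains δ = 1/2. *)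
From HB Require Import structures.
From mathcomp Require Import all_boot all_order all_algebra.
From mathcomp Require Import ring.
Set Implicit Arguments. Unset Strict Implicit. Unset Printing Implicit Defensive.
Import Order.TTheory GRing.Theory Num.Theory.
Local Open Scope ring_scope.

Lemma normalized_le_half (d l : nat) : (0 < l)%N -> (d <= l)%N -> normalized d l <= 1 / 2.
Proof.
move=> l_gt0 dl; rewrite /normalized ler_pdivrMr ?ltr0n ?muln_gt0 //.
have -> : 1 / 2 * (2 * l)%:R = l%:R :> rat by rewrite natrM; field.
by rewrite ler_nat.
Qed.

Lemma normalized_eq_half (d l : nat) : (0 < l)%N -> normalized d l = 1 / 2 <-> d = l.
Proof.
move=> l_gt0; have l2_neq0 : (2 * l)%:R != 0 :> rat by rewrite pnatr_eq0 -lt0n muln_gt0.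
rewrite /normalized; split=> [dl_half|->]; last by rewrite natrM; field; rewrite pnatr_eq0 -lt0n.
apply/eqP; rewrite -(eqr_nat rat) -(divfK l2_neq0 d%:R) dl_half natrM.
by apply/eqP; field.
Qed.

Section SubspaceDistance.
Variables (F : finFieldType) (n : nat).
Implicit Types X Y : {vspace 'rV[F]_n}.

Lemma subspace_distC X Y : subspace_dist X Y = subspace_dist Y X.
Proof. by rewrite /subspace_dist addnC capvC. Qed.

Lemma subspace_distvv X : subspace_dist X X = 0%N.
Proof. by rewrite /subspace_dist capvv addnn -mul2n subnn. Qed.

Lemma subspace_distv0 X : subspace_dist X 0%VS = \dim X.
Proof. by rewrite /subspace_dist capv0 dimv0 muln0 addn0 subn0. Qed.

Lemma subspace_dist0v X : subspace_dist 0%VS X = \dim X.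
Proof. by rewrite subspace_distC subspace_distv0. Qed.

End SubspaceDistance.

Section LinearCode.
Variables (F : finFieldType) (n : nat) (U : seq {vspace 'rV[F]_n}).
Hypothesis U_linear : is_linear_code U.

Lemma linear_code_dist_le_max_dim l X Y :
  is_max_dim U l -> X \in U -> Y \in U -> (subspace_dist X Y <= l)%N.
Proof.
have [_ [_ [bp [bpU [_ _ _ bpK bpD]]]]] := U_linear.
move=> [_ max_l] XU YU.
by rewrite -(bpD X Y Y) // bpK // subspace_distv0 max_l ?bpU.
Qed.

Variables d l : nat.
Hypotheses (min_d : is_min_dist U d) (max_l : is_max_dim U l).

Lemma linear_code_min_dist_le_max_dim : (d <= l)%N.
Proof.
have [[X [Y [XU YU _ <-]]] _] := min_d.
exact: linear_code_dist_le_max_dim.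
Qed.

Lemma min_dist_max_dim_gt0 : (0 < l)%N.
Proof.
have [[X [Y [XU YU XY _]]] _] := min_d; have [_ max_l'] := max_l.
have [Z ZU Z_neq0] : exists2 Z, Z \in U & Z != 0%VS.
  by case: (eqVneq X 0%VS) XY => [-> ?|]; [exists Y; rewrite // eq_sym | exists X].
by apply: leq_trans (max_l' _ ZU); rewrite lt0n dimv_eq0.
Qed.

Lemma linear_code_equidistantP : d = l <-> is_equidistant U.
Proof.
have [[X0 [Y0 [X0U Y0U X0Y0 <-]]] min_le] := min_d.
split=> [dl | [r dist_r]].
  exists l => X Y XU YU XY; apply/eqP; rewrite eqn_leq.
  by rewrite linear_code_dist_le_max_dim //= -dl min_le.
have [[Xl XlU dim_Xl] _] := max_l; have [_ [U0 _]] := U_linear.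
have Xl_neq0 : Xl != 0%VS by rewrite -dimv_eq0 dim_Xl -lt0n min_dist_max_dim_gt0.
by rewrite -dim_Xl -subspace_distv0 !dist_r.
Qed.

End LinearCode.

Section PairCode.
Variables (F : finFieldType) (n : nat) (V : {vspace 'rV[F]_n}).
Hypothesis V_neq0 : V != 0%VS.

Definition pair_code : seq {vspace 'rV[F]_n} := [:: 0%VS; V].

Definition pair_code_add (X Y : {vspace 'rV[F]_n}) := if X == Y then 0%VS else V.

Lemma mem_pair_code X : X \in pair_code -> X = 0%VS \/ X = V.
Proof. by rewrite !inE => /orP[]/eqP->; [left | right]. Qed.

Lemma pair_code_linear : is_linear_code pair_code.
Proof.
have O_neqV : (0%VS : {vspace 'rV[F]_n}) != V by rewrite eq_sym.
have V_simpl := (negbTE V_neq0, negbTE O_neqV, eqxx V, eqxx (0%VS : {vspace 'rV[F]_n})).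
have dist_simpl := (subspace_distv0 V, subspace_dist0v V, @subspace_distvv F n).
split; first by rewrite /= inE andbT.
split; first by rewrite inE eqxx.
exists pair_code_add; split.
  by move=> X Y _ _; rewrite /pair_code_add; case: ifP; rewrite !inE eqxx ?orbT.
split=> [X Y Z | X Y | X | X _ | Y1 Y2 X];
  rewrite /pair_code_add ?eqxx //;
  repeat move=> /mem_pair_code[]->;
  by rewrite ?V_simpl ?dist_simpl.
Qed.

Lemma pair_code_min_dist : is_min_dist pair_code (\dim V).
Proof.
split; first by exists 0%VS, V; split; rewrite ?subspace_dist0v ?inE ?eqxx ?orbT // eq_sym.
move=> X Y /mem_pair_code[]-> /mem_pair_code[]->;
  by rewrite ?eqxx ?subspace_dist0v ?subspace_distv0.
Qed.

Lemma pair_code_max_dim : is_max_dim pair_code (\dim V).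
Proof.
split; first by exists V; rewrite ?inE ?eqxx ?orbT.
by move=> X /mem_pair_code[]->; rewrite ?dimv0.
Qed.

End PairCode.

Theorem corollary1 (F : finFieldType) (n : nat) :
  (forall (U : seq {vspace 'rV[F]_n}), is_linear_code U -> (2 <= size U)%N ->
     forall d l : nat, is_min_dist U d -> is_max_dim U l ->
       normalized d l <= 1 / 2 /\
       (normalized d l = 1 / 2 <-> is_equidistant U)) /\
  ((0 < n)%N ->
     exists (U : seq {vspace 'rV[F]_n}) (d l : nat),
       [/\ is_linear_code U, (2 <= size U)%N, is_min_dist U d, is_max_dim U l
         & normalized d l = 1 / 2]).
Proof.
split=> [U U_linear _ d l min_d max_l | n_gt0].
  have l_gt0 := min_dist_max_dim_gt0 min_d max_l.
  split; first exact/normalized_le_half/(linear_code_min_dist_le_max_dim U_linear min_d).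
  by rewrite normalized_eq_half // (linear_code_equidistantP U_linear).
pose full := (fullv : {vspace 'rV[F]_n}).
have dim_full : \dim full = n by rewrite dimvf /dim /= mul1n.
have full_neq0 : full != 0%VS by rewrite -dimv_eq0 dim_full -lt0n.
exists (pair_code full), (\dim full), (\dim full); split=> //.
- exact: pair_code_linear.
- exact: pair_code_min_dist.
- exact: pair_code_max_dim.
- by apply/normalized_eq_half; rewrite dim_full.
Qed.
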